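(* If $X$ is a closed convex subset of $\mathbb{R}^n$, then $\mathit{HM}_2(X)=0$.
   Context: $X$ carries the Euclidean (subspace) metric. For a metric space $X$, the magnitude homology $\mathit{HM}^\ell_k(X)$ is the degree-$k$ homology of the chain complex whose $k$-chains in grading $\ell$ are the free abelian group on symbols $\langle x_0,\dots,x_k\rangle$ with $x_i\neq x_{i+1}$ and $d(x_0,x_1)+\cdots+d(x_{k-1},x_k)=\ell$, with boundary $\sum_i(-1)^i d^i$, where $d^i$ deletes $x_i$ if $d(x_{i-1},x_i)+d(x_i,x_{i+1})=d(x_{i-1},x_{i+1})$ and is $0$ otherwise (deleting an endpoint always gives $0$); $\mathit{HM}_2(X)=0$ means $\mathit{HM}^\ell_2(X)=0$ for all $\ell$. *)

From HB Require Import structures.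
From mathcomp Require Import all_boot all_order all_algebra.
From mathcomp Require Import all_classical all_reals all_analysis.
Set Implicit Arguments. Unset Strict Implicit. Unset Printing Implicit Defensive.
Import Order.TTheory GRing.Theory Num.Theory.
Import numFieldTopology.Exports numFieldNormedType.Exports.
Local Open Scope ring_scope.

Section MagnitudeHomology.
Variables (R : realType) (n : nat).
Notation V := 'rV[R]_n.

Definition edist (x y : V) : R := Num.sqrt (\sum_(i < n) (x 0 i - y 0 i) ^+ 2).

Definition convex_subset (X : set V) : Prop :=
  forall x y (t : R), X x -> X y -> 0 <= t -> t <= 1 ->
    X ((1 - t) *: x + t *: y).

Fixpoint tlen (s : seq V) : R :=
  match s with
  | x :: ((y :: _) as s') => edist x y + tlen s'
  | _ => 0
  end.

Fixpoint consec_distinct (s : seq V) : bool :=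
  match s with
  | x :: ((y :: _) as s') => (x != y) && consec_distinct s'
  | _ => true
  end.

Definition mgen (X : set V) (k : nat) (l : R) (s : seq V) : Prop :=
  [/\ size s = k.+1, (forall x, x \in s -> X x), consec_distinct s & tlen s = l].

(* A chain: a formal Z-linear combination, given as a finite list of
   (coefficient, generator) pairs; its coefficient function: *)
Definition chain := seq (int * seq V).
Definition coef (c : chain) (s : seq V) : int :=
  \sum_(p <- c | p.2 == s) p.1.

Definition mchain (X : set V) (k : nat) (l : R) (c : chain) : Prop :=
  forall p, p \in c -> mgen X k l p.2.

(* Face d^i (0 < i < k): delete x_i if x_i lies metrically between its
   neighbours; otherwise the face is 0 (represented by omitting it).
   Endpoint faces are always 0. *)
Definition face_nonzero (s : seq V) (i : nat) : bool :=
  let x0 := const_mx 0 in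
  edist (nth x0 s i.-1) (nth x0 s i) + edist (nth x0 s i) (nth x0 s i.+1)
    == edist (nth x0 s i.-1) (nth x0 s i.+1).

Definition delete_at (s : seq V) (i : nat) : seq V := take i s ++ drop i.+1 s.

Definition bd_gen (a : int) (s : seq V) : chain :=
  [seq (((-1) ^+ i) * a, delete_at s i) |
     i <- iota 1 (size s).-2 & face_nonzero s i].

Definition bd (c : chain) : chain := flatten [seq bd_gen p.1 p.2 | p <- c].

(* HM^l_k(X) = 0 : every k-cycle in grading l is a boundary of a (k+1)-chain
   in grading l (equality of chains = equality of coefficient functions). *)
Definition HM_vanishes (X : set V) (k : nat) (l : R) : Prop :=
  forall c : chain, mchain X k l c -> (forall s, coef (bd c) s = 0) ->
    exists b : chain, mchain X k.+1 l b /\ (forall s, coef (bd b) s = coef c s).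

End MagnitudeHomology.

(* A 2-cycle of X is the boundary of an explicit 3-chain built from midpoints,
   which stay in X by convexity.  For a generator <x0,x1,x2>: if x1 is not
   metrically between x0 and x2, insert the midpoint of x1 x2 after x1;
   otherwise insert the midpoint m of x0 x2 on the side of x1 where m lies
   (nothing if x1 = m).  In each case the boundary of the new chain is
   <x0,x1,x2> + sigma(boundary <x0,x1,x2>), where sigma subdivides <a,b> into
   <a, mid a b, b>.  As sigma is injective on 1-generators, sigma kills the
   boundary of a cycle, so the cycle itself is a boundary.  Euclidean geometry
   enters through the equality case of the triangle inequality: d(a,b) + d(b,c)
   = d(a,c) puts b on the segment [a,c], which turns every betweenness question
   about the points involved into a sign condition on the real line. *)

From Pilot Require Import Defs.
From HB Require Import structures.
From mathcomp Require Import all_boot all_order all_algebra.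
From mathcomp Require Import all_classical all_reals all_analysis.
From mathcomp Require Import ring lra zify.
Import Order.TTheory GRing.Theory Num.Theory.
Import numFieldTopology.Exports numFieldNormedType.Exports.
Set Implicit Arguments. Unset Strict Implicit. Unset Printing Implicit Defensive.
Local Open Scope ring_scope.
(* mathcomp-analysis exports another [edist]. *)
Local Notation edist := Defs.edist.

Lemma normD_eq (R : realDomainType) (x y : R) :
  (`|x + y| == `|x| + `|y|) = (0 <= x * y).
Proof.
rewrite -(eqrXn2 (n := 2)) ?addr_ge0 // sqrrD -normrM.
rewrite !real_normK ?num_real // sqrrD ger0_def eq_sym.
by apply/eqP/eqP => [|->]; lra.
Qed.

Section EuclideanGeometry.
Variables (R : realType) (n : nat).
Implicit Types (a b c p u v w x y z : 'rV[R]_n) (r s t : R).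

Definition sqnorm v : R := \sum_(i < n) v 0 i ^+ 2.
Definition dotp u v : R := \sum_(i < n) u 0 i * v 0 i.
Definition enorm v : R := Num.sqrt (sqnorm v).

Lemma sqnorm_ge0 v : 0 <= sqnorm v.
Proof. by apply: sumr_ge0 => i _; apply: sqr_ge0. Qed.

Lemma sqnorm_eq0 v : (sqnorm v == 0) = (v == 0).
Proof.
apply/idP/eqP => [|->]; last by rewrite /sqnorm big1 // => i _; rewrite mxE expr0n.
rewrite psumr_eq0 => [/allP v0|i _]; last exact: sqr_ge0.
apply/rowP => i; have := v0 i (mem_index_enum _).
by rewrite sqrf_eq0 mxE => /eqP.
Qed.

Lemma sqnormZ r v : sqnorm (r *: v) = r ^+ 2 * sqnorm v.
Proof. by rewrite /sqnorm mulr_sumr; apply: eq_bigr => i _; rewrite mxE exprMn. Qed.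

Lemma sqnorm_lincomb r s u v :
  sqnorm (r *: u + s *: v) =
  r ^+ 2 * sqnorm u + 2 * r * s * dotp u v + s ^+ 2 * sqnorm v.
Proof.
rewrite /sqnorm /dotp !mulr_sumr -!big_split /=.
by apply: eq_bigr => i _; rewrite !mxE; ring.
Qed.

Lemma enorm_ge0 v : 0 <= enorm v.
Proof. exact: sqrtr_ge0. Qed.

Lemma sqr_enorm v : enorm v ^+ 2 = sqnorm v.
Proof. exact/sqr_sqrtr/sqnorm_ge0. Qed.

Lemma enorm_eq0 v : (enorm v == 0) = (v == 0).
Proof. by rewrite sqrtr_eq0 -sqnorm_eq0 eq_le sqnorm_ge0 andbT. Qed.

Lemma enormZ r v : enorm (r *: v) = `|r| * enorm v.
Proof. by rewrite /enorm sqnormZ sqrtrM ?sqr_ge0 // sqrtr_sqr. Qed.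

Lemma edistE x y : edist x y = enorm (y - x).
Proof.
rewrite /edist /enorm /sqnorm; congr Num.sqrt; apply: eq_bigr => i _.
by rewrite !mxE -sqrrN opprB.
Qed.

Lemma edist_ge0 x y : 0 <= edist x y.
Proof. by rewrite edistE enorm_ge0. Qed.

Lemma edistxx x : edist x x = 0.
Proof. by apply/eqP; rewrite edistE enorm_eq0 subrr. Qed.

Lemma edistC x y : edist x y = edist y x.
Proof. by rewrite !edistE -opprB -scaleN1r enormZ normrN1 mul1r. Qed.

Lemma edist_eq0 x y : (edist x y == 0) = (x == y).
Proof. by rewrite edistE enorm_eq0 subr_eq0 eq_sym. Qed.

(* Equality case of Cauchy-Schwarz: [sqnorm (|v| u - |u| v)] vanishes. *)
Lemma enormD_eq u v :
  enorm (u + v) = enorm u + enorm v -> enorm v *: u = enorm u *: v.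
Proof.
move=> huv; have dotE : dotp u v = enorm u * enorm v.
  by have := sqnorm_lincomb 1 1 u v; rewrite !scale1r -!sqr_enorm huv; nra.
have : sqnorm (enorm v *: u + (- enorm u) *: v) == 0.
  by rewrite sqnorm_lincomb dotE -!sqr_enorm; apply/eqP; ring.
by rewrite sqnorm_eq0 scaleNr subr_eq0 => /eqP.
Qed.

Definition between a b c : bool := edist a b + edist b c == edist a c.

Lemma between_segment a b c :
  between a b c -> exists2 t, 0 <= t <= 1 & b = a + t *: (c - a).
Proof.
move/eqP; rewrite !edistE; set u := b - a; set v := c - b.
have -> : c - a = u + v by rewrite /u /v [RHS]addrC addrA subrK.
move=> /esym /enormD_eq key.
have [uv0|uv0] := eqVneq (enorm u + enorm v) 0.
  exists 0; first by rewrite lexx ler01.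
  move/eqP: uv0; rewrite paddr_eq0 ?enorm_ge0 // enorm_eq0 subr_eq0 => /andP [/eqP -> _].
  by rewrite scale0r addr0.
have pos : 0 < enorm u + enorm v by rewrite lt_def uv0 addr_ge0 ?enorm_ge0.
exists (enorm u / (enorm u + enorm v)).
  rewrite ler_pdivrMr // mul1r lerDl enorm_ge0 andbT.
  by rewrite divr_ge0 ?enorm_ge0 // ltW.
have E : (enorm u + enorm v) *: u = enorm u *: (u + v).
  by rewrite scalerDl key -scalerDr.
by rewrite (mulrC (enorm u)) -scalerA -E scalerA mulVf // scale1r /u addrC subrK.
Qed.

Lemma edist_line p w r s : edist (p + r *: w) (p + s *: w) = `|s - r| * enorm w.
Proof. by rewrite edistE opprD addrACA subrr add0r -scalerBl enormZ. Qed.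

Lemma between_line p w r s t x y z :
  x = p + r *: w -> y = p + s *: w -> z = p + t *: w ->
  between x y z = (w == 0) || (0 <= (s - r) * (t - s)).
Proof.
move=> -> -> ->; rewrite /between !edist_line -mulrDl -enorm_eq0.
have -> : t - r = (s - r) + (t - s) by ring.
rewrite -normD_eq; have [->|w0] := eqVneq (enorm w) 0; first by rewrite !mulr0 eqxx.
by rewrite (inj_eq (mulIf w0)) eq_sym.
Qed.

Definition mid a b := a + 2^-1 *: (b - a).

Lemma midC a b : mid a b = mid b a.
Proof. by apply/rowP => i; rewrite !mxE; field. Qed.

Lemma mid_convex a b : mid a b = (1 - 2^-1) *: a + 2^-1 *: b.
Proof. by apply/rowP => i; rewrite !mxE; ring. Qed.

Lemma mid_eq_l a b : (mid a b == a) = (a == b).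
Proof.
rewrite /mid -subr_eq0 addrAC subrr add0r scaler_eq0 invr_eq0 pnatr_eq0 /=.
by rewrite subr_eq0 eq_sym.
Qed.

Lemma mid_eq_r a b : (mid a b == b) = (a == b).
Proof. by rewrite midC mid_eq_l eq_sym. Qed.

Lemma between_mid a b : between a (mid a b) b.
Proof.
have E0 : a = a + 0 *: (b - a) by rewrite scale0r addr0.
have E1 : b = a + 1 *: (b - a) by rewrite scale1r addrC subrK.
by rewrite (between_line E0 erefl E1); apply/orP; right; lra.
Qed.

Lemma between_neq a b c : a != b -> between a b c -> a != c.
Proof.
move=> ab; apply: contraTneq => <-.
by rewrite /between edistxx (edistC b) paddr_eq0 ?edist_ge0 // edist_eq0 (negbTE ab).
Qed.

Lemma between_mid_extend a b c : b != c -> between a b (mid b c) -> between a b c.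
Proof.
move=> bc /between_segment [t /andP [t0 t1] Eb].
set w := mid b c - a in Eb.
have w0 : w != 0.
  apply: contra_neq bc => /eqP; rewrite subr_eq0 => /eqP ma.
  move: Eb; rewrite /w ma subrr scaler0 addr0 => ba.
  by apply/eqP; rewrite -mid_eq_l ma ba.
have E0 : a = a + 0 *: w by rewrite scale0r addr0.
have Ec : c = a + (2 - t) *: w.
  by apply/rowP => i; move/rowP/(_ i): Eb; rewrite /w /mid !mxE => Eb; lra.
by rewrite (between_line E0 Eb Ec) (negbTE w0) /=; nra.
Qed.

Lemma between_mid_l a b c :
  a != b -> between a b c -> between a b (mid a c) -> between b (mid a c) c.
Proof.
move=> ab abc; have w0 : c - a != 0 by rewrite subr_eq0 eq_sym (between_neq ab abc).
have [t /andP [t0 t1] Eb] := between_segment abc.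
have E0 : a = a + 0 *: (c - a) by rewrite scale0r addr0.
have Em : mid a c = a + 2^-1 *: (c - a) by [].
have E1 : c = a + 1 *: (c - a) by rewrite scale1r addrC subrK.
by rewrite (between_line E0 Eb Em) (between_line Eb Em E1) (negbTE w0) /=; nra.
Qed.

Lemma between_mid_r a b c : a != b -> between a b c -> ~~ between a b (mid a c) ->
  between a (mid a c) b && between (mid a c) b c.
Proof.
move=> ab abc; have w0 : c - a != 0 by rewrite subr_eq0 eq_sym (between_neq ab abc).
have [t /andP [t0 t1] Eb] := between_segment abc.
have E0 : a = a + 0 *: (c - a) by rewrite scale0r addr0.
have Em : mid a c = a + 2^-1 *: (c - a) by [].
have E1 : c = a + 1 *: (c - a) by rewrite scale1r addrC subrK.
rewrite (between_line E0 Eb Em) (between_line E0 Em Eb) (between_line Em Eb E1).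
rewrite (negbTE w0) /= subr0 -ltNge => h.
have ht : 2^-1 < t.
  by rewrite ltNge; apply/negP => ht; move: h; rewrite ltNge mulr_ge0 // subr_ge0.
by apply/andP; split; nra.
Qed.

Lemma convex_mid X a b : convex_subset X -> X a -> X b -> X (mid a b).
Proof. by move=> cvxX Xa Xb; rewrite mid_convex; apply: cvxX => //; lra. Qed.

End EuclideanGeometry.

Section Chains.
Variables (R : realType) (n : nat).
Local Notation V := 'rV[R]_n.
Implicit Types (X : set V) (c d : chain R n) (s t : seq V) (k : int).

Lemma coef_nil s : coef (nil : chain R n) s = 0.
Proof. by rewrite /coef big_nil. Qed.

Lemma coef_cons p c s : coef (p :: c) s = (if p.2 == s then p.1 else 0) + coef c s.
Proof. by rewrite /coef big_cons; case: ifP => _; rewrite ?add0r. Qed.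

Lemma coef_cat c d s : coef (c ++ d) s = coef c s + coef d s.
Proof. by rewrite /coef big_cat. Qed.

Lemma bd_cons p c : bd (p :: c) = bd_gen p.1 p.2 ++ bd c.
Proof. by []. Qed.

Lemma bd_cat c d : bd (c ++ d) = bd c ++ bd d.
Proof. by rewrite /bd map_cat flatten_cat. Qed.

Lemma size_delete_at s i : (i < size s)%N -> size (delete_at s i) = (size s).-1.
Proof. by move=> lti; rewrite size_cat size_take size_drop lti; lia. Qed.

Lemma size_bd_gen k s q : q \in bd_gen k s -> size q.2 = (size s).-1.
Proof.
case/mapP => i; rewrite mem_filter mem_iota => /and3P [_ i1 lti] -> /=.
by apply: size_delete_at; lia.
Qed.

Lemma size_bd c m :
  (forall p, p \in c -> size p.2 = m.+1) -> forall q, q \in bd c -> size q.2 = m.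
Proof. by move=> hc q /flattenP [qs /mapP [p pc ->]] /size_bd_gen ->; rewrite hc. Qed.

Lemma bd_gen3 k (a b c : V) :
  bd_gen k [:: a; b; c] = if between a b c then [:: (- k, [:: a; c])] else [::].
Proof.
rewrite /bd_gen /= -[face_nonzero _ 1]/(between a b c).
by case: ifP => //= _; rewrite /delete_at /= expr1 mulN1r.
Qed.

Lemma bd_gen4 k (a b c d : V) :
  bd_gen k [:: a; b; c; d] =
  (if between a b c then [:: (- k, [:: a; c; d])] else [::]) ++
  (if between b c d then [:: (k, [:: a; b; d])] else [::]).
Proof.
rewrite /bd_gen /= -[face_nonzero _ 1]/(between a b c).
rewrite -[face_nonzero _ 2]/(between b c d).
by case: ifP => _; case: ifP => _; rewrite /delete_at /= ?expr1 ?mulN1r ?sqrrN1 ?mul1r.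
Qed.

Definition subdiv s : seq V := if s is [:: a; b] then [:: a; mid a b; b] else s.

Definition subdiv_chain d : chain R n := [seq (q.1, subdiv q.2) | q <- d].

Lemma subdiv_chain_cat c d : subdiv_chain (c ++ d) = subdiv_chain c ++ subdiv_chain d.
Proof. exact: map_cat. Qed.

Lemma subdiv_inj s t : size s = 2 -> size t = 2 -> subdiv s = subdiv t -> s = t.
Proof. by case: s t => [|a [|b [|]]] // [|a' [|b' [|]]] //= _ _ [-> _ ->]. Qed.

Lemma coef_subdiv_chain_eq0 d :
  (forall q, q \in d -> size q.2 = 2) -> (forall s, coef d s = 0) ->
  forall s, coef (subdiv_chain d) s = 0.
Proof.
move=> d2 d0 s; rewrite /coef big_map big_seq_cond.
have [/hasP [q qd /eqP qs]|/hasPn nos] := boolP (has (fun q => subdiv q.2 == s) d).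
  rewrite -[RHS](d0 q.2) /coef [in RHS]big_seq_cond; apply: eq_bigl => q' /=.
  case q'd: (q' \in d) => //=; rewrite -qs.
  by apply/eqP/eqP => [/(subdiv_inj (d2 _ q'd) (d2 _ qd))|->].
by rewrite big1 // => q /andP [qd]; rewrite (negbTE (nos q qd)).
Qed.

Definition htpy_gen k s : chain R n :=
  if s is [:: x0; x1; x2] then
    if ~~ between x0 x1 x2 then [:: (k, [:: x0; x1; mid x1 x2; x2])]
    else if x1 == mid x0 x2 then [::]
    else if between x0 x1 (mid x0 x2) then [:: (k, [:: x0; x1; mid x0 x2; x2])]
    else [:: (- k, [:: x0; mid x0 x2; x1; x2])]
  else [::].

Definition htpy c : chain R n := flatten [seq htpy_gen p.1 p.2 | p <- c].

Lemma coef_bd_htpy_gen k x0 x1 x2 s : x0 != x1 -> x1 != x2 ->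
  coef (bd (htpy_gen k [:: x0; x1; x2])) s =
  coef ((k, [:: x0; x1; x2]) :: subdiv_chain (bd_gen k [:: x0; x1; x2])) s.
Proof.
move=> x01 x12; rewrite /htpy_gen bd_gen3.
have [b012|nb012] := boolP (between x0 x1 x2); rewrite ?b012 ?(negbTE nb012) /=.
  have [x1m|x1m] := eqVneq x1 (mid x0 x2).
    by rewrite x1m /= !coef_cons !coef_nil; case: ifP; rewrite ?addr0 ?subrr.
  have [b01m|nb01m] := boolP (between x0 x1 (mid x0 x2)).
    rewrite bd_cons bd_gen4 b01m (between_mid_l x01 b012 b01m) /=.
    by rewrite !coef_cons coef_nil !addr0 addrC.
  have /andP [b0m1 bm12] := between_mid_r x01 b012 nb01m.
  by rewrite bd_cons bd_gen4 b0m1 bm12 /= opprK.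
have nb01m := contra (between_mid_extend x12) nb012.
by rewrite bd_cons bd_gen4 (negbTE nb01m) between_mid.
Qed.

Lemma mgen4 X l (a b c d : V) :
  X a -> X b -> X c -> X d -> a != b -> b != c -> c != d ->
  edist a b + edist b c + edist c d = l -> mgen X 3 l [:: a; b; c; d].
Proof.
move=> Xa Xb Xc Xd ab bc cd len; split => //=.
- by move=> x; rewrite !inE => /or4P [] /eqP ->.
- by rewrite ab bc cd.
- by rewrite addr0 addrA.
Qed.

Lemma htpy_gen_mchain X l k s :
  convex_subset X -> mgen X 2 l s -> mchain X 3 l (htpy_gen k s).
Proof.
move=> cvxX []; case: s => [|x0 [|x1 [|x2 [|]]]] //= _ sX /andP [x01 /andP [x12 _]].
rewrite addr0 => len.
have [X0 X1 X2] : [/\ X x0, X x1 & X x2] by split; apply: sX; rewrite !inE eqxx ?orbT.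
have Xm := convex_mid cvxX X0 X2.
have [b012|nb012] /= := boolP (between x0 x1 x2); last first.
  move=> q; rewrite inE => /eqP -> /=.
  apply: (mgen4 X0 X1 (convex_mid cvxX X1 X2) X2 x01 _ _ _).
  - by rewrite eq_sym mid_eq_l.
  - by rewrite mid_eq_r.
  - by rewrite -addrA (eqP (between_mid x1 x2)).
have x02 := between_neq x01 b012.
have [_|x1m] := eqVneq x1 (mid x0 x2); first by [].
have [b01m|nb01m] := boolP (between x0 x1 (mid x0 x2)); move=> q; rewrite inE => /eqP -> /=.
  apply: (mgen4 X0 X1 Xm X2 x01 x1m _ _); first by rewrite mid_eq_r.
  by rewrite -addrA (eqP (between_mid_l x01 b012 b01m)).
have /andP [b0m1 _] := between_mid_r x01 b012 nb01m.
apply: (mgen4 X0 Xm X1 X2 _ _ x12 _); first by rewrite eq_sym mid_eq_l.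
- by rewrite eq_sym.
- by rewrite (eqP b0m1).
Qed.

Lemma coef_bd_htpy X l c s : mchain X 2 l c ->
  coef (bd (htpy c)) s = coef c s + coef (subdiv_chain (bd c)) s.
Proof.
elim: c => [|[k t] c IH] hc; first by rewrite /= !coef_nil addr0.
have {IH} IH : coef (bd (htpy c)) s = coef c s + coef (subdiv_chain (bd c)) s.
  by apply: IH => q qc; apply: hc; rewrite inE qc orbT.
rewrite /htpy /= -/(htpy c) bd_cat coef_cat IH bd_cons subdiv_chain_cat coef_cat coef_cons /=.
move: (hc _ (mem_head _ _)) => {hc} [].
case: t => [|x0 [|x1 [|x2 [|]]]] //= _ _ /andP [x01 /andP [x12 _]] _.
by rewrite coef_bd_htpy_gen // coef_cons /=; ring.
Qed.

End Chains.

Theorem corollary7p23 (R : realType) (n : nat) (X : set 'rV[R]_n) :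
  closed X -> convex_subset X -> forall l : R, HM_vanishes X 2 l.
Proof.
move=> _ cvxX l c cX c_cycle; exists (htpy c); split.
  move=> q /flattenP [qs /mapP [p pc ->]].
  exact: htpy_gen_mchain cvxX (cX p pc) q.
move=> s; rewrite (coef_bd_htpy s cX) (coef_subdiv_chain_eq0 _ c_cycle) ?addr0 //.
by apply: size_bd => p /cX [].
Qed.
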